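(* Let $A$ be a finite abelian group of even order and let $T$ be a square-free subset of $A$ with $|T|=|A|/2-1$. If $|T-T^0|<|A|$, where $T^0=T\cup\{0\}$, then $\mathrm{CayS}(A,T)$ admits a perfect code.
   Context: $A$ is written additively with identity $0$. An element $x$ of $A$ is a square if $x=2y$ for some $y\in A$; a subset is square-free if it contains no squares. For a square-free $T\subseteq A$, the Cayley sum graph $\mathrm{CayS}(A,T)$ is the simple graph with vertex set $A$ in which distinct $x,y$ are adjacent iff $x+y\in T$. A subset $C$ of the vertex set of a graph is a perfect code if every vertex is at distance at most one from exactly one vertex of $C$. For $B,C\subseteq A$, $B-C=\{b-c:b\in B,c\in C\}$. *)

From HB Require Import structures.
From mathcomp Require Import all_boot all_order all_algebra.
Set Implicit Arguments. Unset Strict Implicit. Unset Printing Implicit Defensive.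
Import GRing.Theory.
Local Open Scope ring_scope.

Definition is_square (A : finZmodType) (x : A) : bool :=
  [exists y : A, x == y *+ 2].

Definition square_free (A : finZmodType) (T : {set A}) : bool :=
  [forall x in T, ~~ is_square x].

Definition cays_adj (A : finZmodType) (T : {set A}) (x y : A) : bool :=
  (x != y) && (x + y \in T).

Definition perfect_code (A : finZmodType) (T : {set A}) (C : {set A}) : Prop :=
  forall v : A, #|[set c in C | (c == v) || cays_adj T v c]| = 1%N.

Definition set_diff_sum (A : finZmodType) (B C : {set A}) : {set A} :=
  [set b - c | b in B, c in C].

From mathcomp Require Import all_boot all_order all_algebra.
Set Implicit Arguments.
Unset Strict Implicit.
Unset Printing Implicit Defensive.
Import GRing.Theory.
Local Open Scope ring_scope.

(* The closed neighbourhood of c in CayS(A,T) is {c} together with T - c, and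
   square-freeness keeps c out of T - c, so it has |T| + 1 = |A|/2 elements.
   Pick g outside T - T^0: then T^0 = N[0] and N[g] = {g} ∪ (T - g) are disjoint,
   since a common point v would give g = (v + g) - v with v + g in T and v in T^0.
   Two disjoint halves of A cover it, so {0, g} is a perfect code.  When T is
   empty, g may be forced to be 0; but then every vertex is isolated and A itself
   is a perfect code. *)

Lemma mem_set_diff_sum (A : finZmodType) (B C : {set A}) b c :
  b \in B -> c \in C -> b - c \in set_diff_sum B C.
Proof. by move=> bB cC; apply: imset2_f. Qed.

Section CayleySumGraph.

Variables (A : finZmodType) (T : {set A}).

Definition closed_nbhd (c : A) : {set A} := [set v | (c == v) || cays_adj T v c].

Lemma closed_nbhdE c : closed_nbhd c = c |: [set v | v + c \in T].
Proof.
apply/setP => v; rewrite !inE /cays_adj eq_sym.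
by case: (v == c).
Qed.

Lemma double_notin_square_free y : square_free T -> y *+ 2 \notin T.
Proof.
move=> /forallP /(_ (y *+ 2)); apply: contraTN => yT.
by rewrite yT negbK; apply/existsP; exists y.
Qed.

Lemma card_closed_nbhd c : square_free T -> #|closed_nbhd c| = #|T|.+1.
Proof.
move=> sqfT; rewrite closed_nbhdE cardsU1.
have -> : [set v | v + c \in T] = (+%R^~ c) @^-1: T by apply/setP => v; rewrite !inE.
by rewrite card_preimset ?inE -?mulr2n ?double_notin_square_free //; apply: addIr.
Qed.

Lemma perfect_code_pair a b :
    [disjoint closed_nbhd a & closed_nbhd b] ->
    closed_nbhd a :|: closed_nbhd b = setT ->
  perfect_code T [set a; b].
Proof.
move=> dis cover v.
have -> : [set c in [set a; b] | (c == v) || cays_adj T v c]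
        = [set c in [set a; b] | v \in closed_nbhd c] by apply/setP => c; rewrite !inE.
apply/eqP/cards1P.
have /setUP[va | vb] : v \in closed_nbhd a :|: closed_nbhd b by rewrite cover inE.
- exists a; apply/setP => c; rewrite in_set in_set2 in_set1.
  case: (eqVneq c a) => [-> | _] /=; first by rewrite va.
  by case: eqP => // ->; rewrite (disjointFr dis va).
- exists b; apply/setP => c; rewrite in_set in_set2 in_set1.
  case: (eqVneq c b) => [-> | _] /=; first by rewrite vb orbT.
  by case: eqP => // ->; rewrite (disjointFl dis vb).
Qed.

Lemma closed_nbhd0 : closed_nbhd 0 = 0 |: T.
Proof. by apply/setP => v; rewrite closed_nbhdE !inE addr0. Qed.

Lemma disjoint_closed_nbhd0 g :
    g \notin set_diff_sum T (0 |: T) -> g != 0 ->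
  [disjoint closed_nbhd 0 & closed_nbhd g].
Proof.
move=> gD g0; rewrite closed_nbhd0 closed_nbhdE.
apply/pred0P => v /=; apply/negP => /andP[v0 /setU1P[vg | vgT]].
- move: v0; rewrite vg => /setU1P[/eqP | gT]; first exact/negP.
  by case/negP: gD; rewrite -[g]subr0; apply: mem_set_diff_sum; rewrite ?setU11.
- rewrite inE in vgT; case/negP: gD.
  by rewrite -(addKr v g) addrC; apply: mem_set_diff_sum.
Qed.

End CayleySumGraph.

Lemma perfect_code_set0 (A : finZmodType) : perfect_code (set0 : {set A}) setT.
Proof.
move=> v; apply/eqP/cards1P; exists v; apply/setP => c.
by rewrite !inE /cays_adj inE andbF orbF eq_sym.
Qed.

Lemma setU_disjoint_cardT (A : finType) (B C : {set A}) :
  [disjoint B & C] -> (#|B| + #|C| = #|A|)%N -> B :|: C = setT.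
Proof.
move=> /disjoint_setI0 BC0 cardBC; apply/eqP.
by rewrite eqEcard subsetT cardsT cardsU BC0 cards0 subn0 cardBC leqnn.
Qed.

Theorem corollary2p8 (A : finZmodType) (T : {set A}) :
  ~~ odd #|A| ->
  square_free T ->
  #|T| = (#|A| %/ 2 - 1)%N ->
  (#|set_diff_sum T ((0%R : A) |: T)| < #|A|)%N ->
  exists C : {set A}, perfect_code T C.
Proof.
move=> evenA sqfT cardT small.
have [-> | [t tT]] := set_0Vmem T; first by exists setT; apply: perfect_code_set0.
have [g gD] : exists g, g \notin set_diff_sum T (0 |: T).
  have /subsetPn[g _ gD] : ~~ ([set: A] \subset set_diff_sum T (0 |: T)).
    by apply: contraL small => /subset_leq_card; rewrite cardsT leqNgt.
  by exists g.
have g0 : g != 0.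
  apply: contraNneq gD => ->; rewrite -(subrr t).
  by apply: mem_set_diff_sum; rewrite // setU1r.
have dis := disjoint_closed_nbhd0 gD g0.
exists [set 0; g]; apply: (perfect_code_pair dis); apply: (setU_disjoint_cardT dis).
have : (0 < #|T|)%N by apply/card_gt0P; exists t.
rewrite !card_closed_nbhd // cardT subn_gt0 subn1 => /ltnW/prednK ->.
by rewrite addnn divn2 -[RHS]odd_double_half (negbTE evenA).
Qed.
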